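(* Let $\mathcal{X}$ be a right coideal of $\mathcal{U}$ (i.e. a subspace with $\Delta(\mathcal{X})\subset\mathcal{X}\otimes\mathcal{U}$) and let $X\in\mathcal{X}$, written in the PBW basis as $X=\sum_{i,\nu,j,k}\alpha_{i,\nu,j,k}F^{(i)}f_\nu E^{(j)}G^{(k)}$ (finitely many nonzero $\alpha_{i,\nu,j,k}\in\mathbb{C}$, $\nu\in\mathbb{C}^\times$, $i,j,k\in\mathbb{N}_0$). For $\mu\in\mathbb{C}^\times$ and $r,s,t\in\mathbb{N}_0$ put $$X_{r,\mu,s,t}:=\sum_{i\ge r,\ j\ge s,\ k\ge t}\alpha_{i,\mu,j,k}\,F^{(i-r)}f_{q^{-r-s}\mu}E^{(j-s)}G^{(k-t)}.$$ Then every $X_{r,\mu,s,t}$ lies in $\mathcal{X}$, and $\mathrm{Lin}\{X_{r,\mu,s,t}: r,s,t\in\mathbb{N}_0,\mu\in\mathbb{C}^\times\}$ is the smallest right coideal of $\mathcal{U}$ containing $X$.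
   Context: Let $q\in\mathbb{C}$ be transcendental (in particular $q\ne0$ and not a root of unity). $\mathcal{U}$ is the unital algebra generated by $E,F,G$ and $f_\mu$ ($\mu\in\mathbb{C}^\times=\mathbb{C}\setminus\{0\}$) with relations $f_\mu f_\nu=f_{\mu\nu}$, $f_\mu E=\mu^2Ef_\mu$, $f_\mu F=\mu^{-2}Ff_\mu$, $f_\mu G=Gf_\mu$, $GE=E(G+2)$, $GF=F(G-2)$, $EF-FE=(f_q-f_{q^{-1}})/(q-q^{-1})$; $f_1=1$. Fix $q^{1/2}$ and put $K=f_{q^{1/2}}$. $\mathcal{U}$ is a Hopf algebra with $\Delta E=E\otimes K+K^{-1}\otimes E$, $\Delta F=F\otimes K+K^{-1}\otimes F$, $\Delta G=1\otimes G+G\otimes1$, $\Delta f_\mu=f_\mu\otimes f_\mu$, $\varepsilon(E)=\varepsilon(F)=\varepsilon(G)=0$, $\varepsilon(f_\mu)=1$. Let $[k]=(q^k-q^{-k})/(q-q^{-1})$, $[k]!=[k]\cdots[1]$, $[0]!=1$, and $F^{(k)}=F^kK^{-k}/[k]!$, $E^{(k)}=K^{-k}E^k/[k]!$, $G^{(k)}=G^k/k!$. The elements $F^{(i)}f_\mu E^{(j)}G^{(k)}$ ($i,j,k\in\mathbb{N}_0$, $\mu\in\mathbb{C}^\times$) form a vector space basis of $\mathcal{U}$ (PBW basis). *)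

(* C := R[i] (complex numbers over a real type R, from
   mathcomp-real-closed's complex.v); R : realType is a complete archimedean
   ordered field, i.e. (a copy of) the reals, so R[i] is (a copy of) C. *)
From HB Require Import structures.
From mathcomp Require Import all_boot all_order all_algebra.
From mathcomp Require Import reals complex.
Set Implicit Arguments.
Unset Strict Implicit.
Unset Printing Implicit Defensive.
Import Order.TTheory GRing.Theory Num.Theory.
Local Open Scope ring_scope.

Section Defs.
Variable R : realType.
Local Notation C := (R[i]).

Definition transcendental (z : C) : Prop :=
  forall p : {poly rat}, p != 0 -> ~~ root (map_poly ratr p) z.

Definition qint (q : C) (k : nat) : C := (q ^+ k - q ^- k) / (q - q^-1).
Definition qfact (q : C) (k : nat) : C := \prod_(1 <= l < k.+1) qint q l.

Definition is_basis (I : eqType) (V : lmodType C) (P : I -> Prop) (b : I -> V)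
  : Prop :=
  (forall v : V, exists (s : seq I) (c : I -> C),
      (forall i, i \in s -> P i) /\ v = \sum_(i <- s) c i *: b i) /\
  (forall (s : seq I) (c : I -> C), uniq s -> (forall i, i \in s -> P i) ->
      \sum_(i <- s) c i *: b i = 0 -> forall i, i \in s -> c i = 0).

Definition span_of (I : eqType) (V : lmodType C) (P : I -> Prop) (b : I -> V)
  (v : V) : Prop :=
  exists (s : seq I) (c : I -> C),
    (forall i, i \in s -> P i) /\ v = \sum_(i <- s) c i *: b i.

Definition pbw_index := (nat * C * nat * nat)%type.
Definition pbw_ok (x : pbw_index) : Prop := x.1.1.2 != 0.

Section Algebra.
Variables (q sq : C) (U : algType C) (E F G : U) (f : C -> U).

Definition K : U := f sq.
Definition Kinv : U := f sq^-1.

Definition Fdiv (i : nat) : U := (qfact q i)^-1 *: (F ^+ i * Kinv ^+ i).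
Definition Ediv (j : nat) : U := (qfact q j)^-1 *: (Kinv ^+ j * E ^+ j).
Definition Gdiv (k : nat) : U := (k`!%:R : C)^-1 *: G ^+ k.

Definition pbw (x : pbw_index) : U :=
  Fdiv x.1.1.1 * f x.1.1.2 * Ediv x.1.2 * Gdiv x.2.

(* The defining relations of U together with the PBW theorem (which
   identifies U with the algebra of the paper). *)
Record is_U : Prop := {
  U_fmul : forall mu nu, mu != 0 -> nu != 0 -> f mu * f nu = f (mu * nu);
  U_f1 : f 1 = 1;
  U_fE : forall mu, mu != 0 -> f mu * E = mu ^+ 2 *: (E * f mu);
  U_fF : forall mu, mu != 0 -> f mu * F = mu ^- 2 *: (F * f mu);
  U_fG : forall mu, mu != 0 -> f mu * G = G * f mu;
  U_GE : G * E = E * (G + 2%:R);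
  U_GF : G * F = F * (G - 2%:R);
  U_EF : E * F - F * E = (q - q^-1)^-1 *: (f q - f q^-1);
  U_pbw : is_basis pbw_ok pbw
}.

(* T together with tens : U -> U -> T is the tensor algebra U (x) U:
   tens is bilinear, multiplicative componentwise, and the tensors of
   pairs of PBW basis vectors form a basis of T. *)
Record is_tensor_square (T : algType C) (tens : U -> U -> T) : Prop := {
  tens_linl : forall a x y z, tens (a *: x + y) z = a *: tens x z + tens y z;
  tens_linr : forall a x y z, tens z (a *: x + y) = a *: tens z x + tens z y;
  tens_mul : forall a b c d, tens a b * tens c d = tens (a * c) (b * d);
  tens_one : tens 1 1 = 1;
  tens_basis : is_basis (fun p : pbw_index * pbw_index => pbw_ok p.1 /\ pbw_ok p.2)
                        (fun p => tens (pbw p.1) (pbw p.2))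
}.

Record is_coproduct (T : algType C) (tens : U -> U -> T) (Delta : U -> T)
  : Prop := {
  Delta_lin : forall a x y, Delta (a *: x + y) = a *: Delta x + Delta y;
  Delta_mul : forall x y, Delta (x * y) = Delta x * Delta y;
  Delta_one : Delta 1 = 1;
  Delta_E : Delta E = tens E K + tens Kinv E;
  Delta_F : Delta F = tens F K + tens Kinv F;
  Delta_G : Delta G = tens 1 G + tens G 1;
  Delta_f : forall mu, mu != 0 -> Delta (f mu) = tens (f mu) (f mu)
}.

Definition subspace (X : U -> Prop) : Prop :=
  X 0 /\ forall (a : C) x y, X x -> X y -> X (a *: x + y).

Definition tensor_XU (T : algType C) (tens : U -> U -> T) (X : U -> Prop)
  (t : T) : Prop :=
  exists s : seq (U * U), (forall p, p \in s -> X p.1) /\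
    t = \sum_(p <- s) tens p.1 p.2.

Definition right_coideal (T : algType C) (tens : U -> U -> T) (Delta : U -> T)
  (X : U -> Prop) : Prop :=
  subspace X /\ forall x, X x -> tensor_XU tens X (Delta x).

Definition Xrmst (l : seq pbw_index) (alpha : pbw_index -> C)
  (r : nat) (mu : C) (s t : nat) : U :=
  \sum_(x <- l | (x.1.1.2 == mu) && (r <= x.1.1.1)%N && (s <= x.1.2)%N
                 && (t <= x.2)%N)
     alpha x *: pbw ((x.1.1.1 - r)%N, q ^- (r + s)%N * mu, (x.1.2 - s)%N, (x.2 - t)%N).

End Algebra.
End Defs.

(* Iterating the q-binomial formula for divided powers of the skew-primitive
   elements F K^-1, K^-1 E and G gives
     Delta (F^(i) f_nu E^(j) G^(k)) =
       sum_(r,s,t) F^(i-r) f_(q^(-r-s) nu) E^(j-s) G^(k-t) (x) F^(r) f_nu E^(s) G^(t).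
   The right tensor factors are PBW vectors, so applying
   id (x) (coefficient of F^(r) f_mu E^(s) G^(t)) to Delta X yields exactly
   X_(r,mu,s,t); this map sends Y (x) U into Y for every subspace Y, hence every
   right coideal containing X contains all X_(r,mu,s,t).  Conversely
     Delta X_(r,mu,s,t) = sum X_(r+r',mu,s+s',t+t') (x) F^(r') f_(q^(-r-s) mu) E^(s') G^(t'),
   so the span of the X_(r,mu,s,t) is a right coideal, and it contains
   X = sum_mu X_(0,mu,0,0). *)

From HB Require Import structures.
From mathcomp Require Import all_boot all_order all_algebra.
From mathcomp Require Import reals complex ring zify.
From Stdlib Require Import IndefiniteDescription.
Import Order.TTheory GRing.Theory Num.Theory.
Local Open Scope ring_scope.

Set Implicit Arguments.
Unset Strict Implicit.

Lemma big_seq_partition (J K : eqType) (W : nmodType) (key : J -> K)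
    (u : seq K) (l : seq J) (F : J -> W) :
  uniq u -> {subset [seq key x | x <- l] <= u} ->
  \sum_(k <- u) \sum_(x <- l | key x == k) F x = \sum_(x <- l) F x.
Proof.
move=> uniq_u l_u; under eq_bigr do rewrite big_mkcond.
rewrite exchange_big /= big_seq_cond [RHS]big_seq_cond.
apply: eq_bigr => x /andP[xl _]; rewrite (bigD1_seq (key x)) ?l_u ?map_f //=.
by rewrite eqxx big1 ?addr0 // => k; rewrite eq_sym => /negPf ->.
Qed.

Section Combinations.
Variables (R : realType) (I : eqType) (W : lmodType R[i]).

Lemma lincomb_collect (w : I -> W) (u : seq I) (S : seq (I * R[i])) :
  uniq u -> {subset [seq p.1 | p <- S] <= u} ->
  \sum_(i <- u) (\sum_(p <- S | p.1 == i) p.2) *: w i = \sum_(p <- S) p.2 *: w p.1.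
Proof.
move=> uniq_u S_u; rewrite -(big_seq_partition _ uniq_u S_u).
by apply: eq_bigr => i _; rewrite scaler_suml; apply: eq_bigr => p /eqP ->.
Qed.

Lemma span_ofP (P : I -> Prop) (b : I -> W) v :
  span_of P b v <-> exists S : seq (I * R[i]),
    (forall p, p \in S -> P p.1) /\ v = \sum_(p <- S) p.2 *: b p.1.
Proof.
split=> [[s [c [Ps ->]]]|[S [PS ->]]].
  exists [seq (j, c j) | j <- s]; rewrite big_map; split=> // p /mapP[j js ->].
  exact: Ps.
exists (undup [seq p.1 | p <- S]), (fun i => \sum_(p <- S | p.1 == i) p.2).
split; first by move=> i; rewrite mem_undup => /mapP[p Sp ->]; apply: PS.
by rewrite lincomb_collect ?undup_uniq // => i; rewrite mem_undup.
Qed.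

Lemma lincomb_scale_add (w : I -> W) a (S S' : seq (I * R[i])) :
  a *: \sum_(p <- S) p.2 *: w p.1 + \sum_(p <- S') p.2 *: w p.1 =
  \sum_(p <- [seq (p.1, a * p.2) | p <- S] ++ S') p.2 *: w p.1.
Proof.
rewrite big_cat big_map scaler_sumr; congr (_ + _).
by apply: eq_bigr => p _; rewrite scalerA.
Qed.

Lemma lincomb_scale_add_supp (P : I -> Prop) a (S S' : seq (I * R[i])) :
  (forall p, p \in S -> P p.1) -> (forall p, p \in S' -> P p.1) ->
  forall p, p \in [seq (p.1, a * p.2) | p <- S] ++ S' -> P p.1.
Proof. by move=> PS PS' p; rewrite mem_cat => /orP[/mapP[p' /PS ? ->]|/PS']. Qed.

End Combinations.

Section BasisExtension.
Variables (R : realType) (I : eqType) (V : lmodType R[i]) (P : I -> Prop) (b : I -> V).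
Hypothesis hb : is_basis P b.

Lemma basis_lincomb_transfer (W : lmodType R[i]) (w : I -> W)
    (S S' : seq (I * R[i])) :
  (forall p, p \in S ++ S' -> P p.1) ->
  \sum_(p <- S) p.2 *: b p.1 = \sum_(p <- S') p.2 *: b p.1 ->
  \sum_(p <- S) p.2 *: w p.1 = \sum_(p <- S') p.2 *: w p.1.
Proof.
move=> PSS' eqSS'; set u := undup [seq p.1 | p <- S ++ S'].
have [uS uS'] : {subset [seq p.1 | p <- S] <= u} /\ {subset [seq p.1 | p <- S'] <= u}.
  by split=> i /mapP[p Sp ->]; rewrite mem_undup map_f // mem_cat Sp ?orbT.
pose d i := \sum_(p <- S | p.1 == i) p.2 - \sum_(p <- S' | p.1 == i) p.2.
have d0 : forall i, i \in u -> d i = 0.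
  apply: hb.2; first exact: undup_uniq.
    by move=> i; rewrite mem_undup => /mapP[p Sp ->]; apply: PSS'.
  under eq_bigr do rewrite scalerBl.
  by rewrite sumrB !lincomb_collect ?undup_uniq // eqSS' subrr.
rewrite -(lincomb_collect w (undup_uniq _) uS) -(lincomb_collect w (undup_uniq _) uS').
by apply: eq_big_seq => i /d0 /eqP; rewrite subr_eq0 => /eqP ->.
Qed.

(* Any representation of [v] will do: by [basis_lincomb_transfer], [basis_ext]
   does not depend on the choice. *)
Definition basis_coords (v : V) : seq (I * R[i]) :=
  proj1_sig (constructive_indefinite_description _ ((span_ofP P b v).1 (hb.1 v))).

Lemma basis_coordsP v : (forall p, p \in basis_coords v -> P p.1) /\
  v = \sum_(p <- basis_coords v) p.2 *: b p.1.
Proof. by rewrite /basis_coords; case: constructive_indefinite_description. Qed.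

Definition basis_ext (W : lmodType R[i]) (w : I -> W) (v : V) : W :=
  \sum_(p <- basis_coords v) p.2 *: w p.1.

Lemma basis_ext_lincomb (W : lmodType R[i]) (w : I -> W) (S : seq (I * R[i])) :
  (forall p, p \in S -> P p.1) ->
  basis_ext w (\sum_(p <- S) p.2 *: b p.1) = \sum_(p <- S) p.2 *: w p.1.
Proof.
move=> PS; have [Pc ec] := basis_coordsP (\sum_(p <- S) p.2 *: b p.1).
rewrite /basis_ext; apply: (basis_lincomb_transfer w _ (esym ec)) => p.
by rewrite mem_cat => /orP[/Pc|/PS].
Qed.

Lemma basis_ext_is_linear (W : lmodType R[i]) (w : I -> W) : linear (basis_ext w).
Proof.
move=> a x y; have [Px ex] := basis_coordsP x; have [Py ey] := basis_coordsP y.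
rewrite {1}ex {1}ey lincomb_scale_add basis_ext_lincomb ?lincomb_scale_add //.
exact: lincomb_scale_add_supp.
Qed.

End BasisExtension.

Lemma subspaceZ (R : realType) (V : algType R[i]) (Y : V -> Prop) a y :
  subspace Y -> Y y -> Y (a *: y).
Proof. by move=> [Y0 YP] Yy; rewrite -[a *: y]addr0; apply: YP. Qed.

Lemma subspaceD (R : realType) (V : algType R[i]) (Y : V -> Prop) x y :
  subspace Y -> Y x -> Y y -> Y (x + y).
Proof. by move=> [Y0 YP] Yx Yy; rewrite -[x]scale1r; apply: YP. Qed.

Lemma subspace_sum (R : realType) (V : algType R[i]) (Y : V -> Prop) {J : Type}
    {s : seq J} {P : pred J} {g : J -> V} :
  subspace Y -> (forall j, P j -> Y (g j)) -> Y (\sum_(j <- s | P j) g j).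
Proof.
move=> sY Yg; elim/big_rec: _ => [|j v Pj Yv]; first by case: sY.
exact: subspaceD (Yg j Pj) Yv.
Qed.

Lemma span_subspace (R : realType) (I : eqType) (V : algType R[i]) (P : I -> Prop)
    (b : I -> V) : subspace (span_of P b).
Proof.
split; first by apply/span_ofP; exists [::]; rewrite big_nil.
move=> a x y /span_ofP[S [PS ->]] /span_ofP[S' [PS' ->]].
apply/span_ofP; exists ([seq (p.1, a * p.2) | p <- S] ++ S').
by rewrite lincomb_scale_add; split=> //; apply: lincomb_scale_add_supp.
Qed.

Lemma span_of_sub (R : realType) (I : eqType) (V : algType R[i]) (P : I -> Prop)
    (b : I -> V) (Y : V -> Prop) :
  subspace Y -> (forall i, P i -> Y (b i)) -> forall v, span_of P b v -> Y v.
Proof.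
move=> sY Yb v /span_ofP[S [PS ->]]; rewrite big_seq.
by apply: subspace_sum => // p /PS /Yb; apply: subspaceZ.
Qed.

Lemma sumr_adjacent_pairs (K : pzRingType) (W : lmodType K) (w : nat -> W)
    (A B : nat -> K) (N : K) n :
  A 0 = N -> B n = N -> (forall r, (r < n)%N -> A r.+1 + B r = N) ->
  \sum_(r < n.+1) (A r *: w r + B r *: w r.+1) = N *: \sum_(r < n.+2) w r.
Proof.
move=> A0 Bn AB; rewrite big_split /= big_ord_recl [X in _ + X]big_ord_recr /= A0 Bn.
rewrite [\sum_(r < n.+2) _]big_ord_recl big_ord_recr /= !scalerDr -!addrA.
congr (_ + _); rewrite addrA -big_split scaler_sumr /bump /= add1n; congr (_ + _).
by apply: eq_bigr => r _; rewrite /= add1n -scalerDl AB.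
Qed.

Lemma big_ord_widen_if (W : nmodType) n N (H : nat -> W) : (n < N)%N ->
  \sum_(r < n.+1) H r = \sum_(r < N) (if (r <= n)%N then H r else 0).
Proof. by move=> nN; rewrite (big_ord_widen N) // big_mkcond. Qed.

Lemma big_ord3_delta (W : nmodType) N r s t (Y : nat -> nat -> nat -> W) :
  \sum_(r' < N) \sum_(s' < N) \sum_(t' < N)
     (if (r' == r :> nat) && (s' == s :> nat) && (t' == t :> nat) then Y r' s' t' else 0)
  = if [&& r < N, s < N & t < N]%N then Y r s t else 0.
Proof.
under eq_bigr => r' _ do under eq_bigr => s' _ do
  rewrite -big_mkcond (big_ord1_cond_eq _ (fun t' => Y r' s' t')
                         (fun=> (r' == r :> nat) && (s' == s :> nat))) andbA.
under eq_bigr => r' _ do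
  rewrite -big_mkcond (big_ord1_cond_eq _ (fun s' => Y r' s' t)
                         (fun=> (t < N)%N && (r' == r :> nat))) andbA.
by rewrite -big_mkcond (big_ord1_cond_eq _ (fun r' => Y r' s t)
                          (fun=> (s < N)%N && (t < N)%N)).
Qed.

Lemma if_and_swap (W : nmodType) (a b c a' b' c' d : bool) (y : W) :
  (if [&& a', b' & c'] then (if a && d && b && c then y else 0) else 0) =
  (if a && b && c then (if d && a' && b' && c' then y else 0) else 0).
Proof. by case: a; case: b; case: c; case: d; rewrite /= ?andbF ?if_same // andbA. Qed.

Lemma exchange_big_ord3 (W : nmodType) (J : Type) N (l : seq J)
    (H : 'I_N -> 'I_N -> 'I_N -> J -> W) :
  \sum_(r < N) \sum_(s < N) \sum_(t < N) \sum_(x <- l) H r s t x =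
  \sum_(x <- l) \sum_(r < N) \sum_(s < N) \sum_(t < N) H r s t x.
Proof.
under eq_bigr => r _ do under eq_bigr => s _ do rewrite exchange_big.
by under eq_bigr => r _ do rewrite exchange_big; rewrite exchange_big.
Qed.

Section QNumbers.
Variables (R : realType) (q : R[i]).
Hypothesis hq : transcendental q.

Lemma transcendental_neq0 : q != 0.
Proof. by have := hq (negbT (polyX_eq0 _)); rewrite map_polyX rootX. Qed.

Lemma transcendental_expf_neq1 m : (0 < m)%N -> q ^+ m != 1.
Proof.
move=> m_gt0; have := hq (p := 'X^m - 1); rewrite -size_poly_eq0 size_XnsubC //.
by rewrite rmorphB /= map_polyXn rmorph1 /root !hornerE subr_eq0 => ->.
Qed.

Lemma qint_neq0 n : qint q n.+1 != 0.
Proof.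
have q0 := transcendental_neq0.
have qq2 : q ^+ 2 != 1 := @transcendental_expf_neq1 2 isT.
rewrite /qint mulf_eq0 invr_eq0 negb_or !subr_eq0; apply/andP; split.
  apply: contraTneq (@transcendental_expf_neq1 (n.+1 + n.+1) isT) => qnn.
  by rewrite exprD {2}qnn mulfV ?eqxx // expf_neq0.
by apply: contraTneq qq2 => qqV; rewrite expr2 {2}qqV mulfV ?eqxx.
Qed.

Lemma qint_pascal r m :
  (q ^- r.+1) ^- 2 * (q ^+ m * qint q m.+1) + q ^+ r * qint q r.+1 =
  q ^+ (r + m).+1 * qint q (r + m).+2.
Proof.
have q0 := transcendental_neq0.
have q21 : q * q - 1 != 0 by rewrite subr_eq0 -expr2 transcendental_expf_neq1.
rewrite /qint !exprS !exprD.
by field; rewrite q0 q21 !expf_neq0.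
Qed.

End QNumbers.

Section ConverseAlgebra.
Variables (K : pzRingType) (A : algType K).
HB.instance Definition _ := GRing.Lmodule.on A^c.
HB.instance Definition _ := GRing.Lmodule_isLalgebra.Build K A^c
  (fun k (x y : A) => scalerAr k y x).
HB.instance Definition _ := GRing.Lalgebra_isAlgebra.Build K A^c
  (fun k (x y : A) => scalerAl k y x).
End ConverseAlgebra.

Section DividedPowerCoproduct.
Variables (K : fieldType) (U T : algType K) (tens : U -> U -> T) (Delta : U -> T).
Hypotheses (tensl_lin : forall z, linear (tens^~ z)) (tensr_lin : forall z, linear (tens z)).
Hypotheses (tensM : forall a b c d, tens a b * tens c d = tens (a * c) (b * d))
           (tens11 : tens 1 1 = 1).
Hypotheses (DeltaL : linear Delta) (DeltaM : {morph Delta : x y / x * y})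
           (Delta1 : Delta 1 = 1).

HB.instance Definition _ := bilinear_isBilinear.Build K U U T *:%R *:%R tens
  (tensl_lin, tensr_lin).
HB.instance Definition _ := GRing.isLinear.Build K U T *:%R Delta DeltaL.

(* [g r] plays the role of [g1 ^+ r]; [c] and [N] encode the q-Pascal rule. *)

Variables (x g1 : U) (g D : nat -> U) (N c : nat -> K).
Hypotheses (Delta_x : Delta x = tens x 1 + tens g1 x)
           (g0 : g 0 = 1) (gS : forall r, g r * g1 = g r.+1)
           (g_x : forall r, g r * x = c r *: (x * g r)).
Hypotheses (D0 : D 0 = 1) (DS : forall n, D n * x = N n *: D n.+1)
           (N_neq0 : forall n, N n != 0) (c0 : c 0 = 1)
           (N_pascal : forall r m, c r.+1 * N m + N r = N (r + m).+1).

Lemma coproduct_divided_power n :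
  Delta (D n) = \sum_(r < n.+1) tens (D (n - r) * g r) (D r).
Proof.
elim: n => [|n IH]; first by rewrite big_ord1 D0 g0 mulr1 Delta1 tens11.
have -> : D n.+1 = (N n)^-1 *: (D n * x) by rewrite DS scalerA mulVf ?scale1r.
pose Tm r := tens (D (n.+1 - r) * g r) (D r).
rewrite linearZ /= DeltaM IH Delta_x mulr_suml.
rewrite (eq_bigr (fun r : 'I_n.+1 => (c r * N (n - r)) *: Tm r + N r *: Tm r.+1)).
  rewrite (@sumr_adjacent_pairs _ _ Tm (fun r => c r * N (n - r)) N (N n))
    ?scalerA ?mulVf ?scale1r //.
    by rewrite c0 mul1r subn0.
  by move=> r rn; rewrite N_pascal; congr N; lia.
move=> r _; have rn : (r <= n)%N by rewrite -ltnS.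
rewrite mulrDr !tensM mulr1 -!mulrA g_x gS DS -scalerAr mulrA DS -scalerAl.
by rewrite !linearZl linearZr /= scalerA /Tm subSn ?subSS.
Qed.

End DividedPowerCoproduct.

Section QuantumAlgebra.
Variables (R : realType) (q sq : R[i]).
Hypotheses (hq : transcendental q) (hsq : sq ^+ 2 = q).
Variables (U : algType R[i]) (E F G : U) (f : R[i] -> U).
Hypothesis hU : is_U q sq E F G f.
Variables (T : algType R[i]) (tens : U -> U -> T).
Hypothesis hT : is_tensor_square q sq E F G f tens.
Variable Delta : U -> T.
Hypothesis hD : is_coproduct sq E F G f tens Delta.

Let tensl_lin z : linear (tens^~ z). Proof. by move=> a x y; apply: (tens_linl hT). Qed.
Let tensr_lin z : linear (tens z). Proof. by move=> a x y; apply: (tens_linr hT). Qed.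

HB.instance Definition _ := bilinear_isBilinear.Build R[i] U U T *:%R *:%R tens
  (tensl_lin, tensr_lin).
HB.instance Definition _ := GRing.isLinear.Build R[i] U T *:%R Delta (Delta_lin hD).

Local Notation Kinv := (Kinv sq f).
Local Notation Fd := (Fdiv q sq F f).
Local Notation Ed := (Ediv q sq E f).
Local Notation Gd := (Gdiv G).
Local Notation pbw := (pbw q sq E F G f).

Let q_neq0 : q != 0 := transcendental_neq0 hq.
Let sq_neq0 : sq != 0.
Proof. by apply: contraNneq q_neq0 => sq0; rewrite -hsq sq0 expr0n. Qed.
Let qVn_neq0 r : q ^- r != 0. Proof. by rewrite invr_eq0 expf_neq0. Qed.

Lemma f_comm a b : a != 0 -> b != 0 -> f a * f b = f b * f a.
Proof. by move=> a0 b0; rewrite !(U_fmul hU) // mulrC. Qed.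

Lemma Kinv_mul_F : Kinv * F = q *: (F * Kinv).
Proof. by rewrite (U_fF hU) ?invr_eq0 // -exprVn invrK hsq. Qed.

Lemma E_mul_Kinv : E * Kinv = q *: (Kinv * E).
Proof.
by rewrite (U_fE hU) ?invr_eq0 // scalerA exprVn hsq mulfV // scale1r.
Qed.

Lemma Kinv_mul_K : Kinv * K sq f = 1.
Proof. by rewrite (U_fmul hU) ?invr_eq0 // mulVf // (U_f1 hU). Qed.

Lemma K_mul_Kinv : K sq f * Kinv = 1.
Proof. by rewrite (U_fmul hU) ?invr_eq0 // mulfV // (U_f1 hU). Qed.

Lemma Kinv_sqr : Kinv * Kinv = f q^-1.
Proof. by rewrite (U_fmul hU) ?invr_eq0 // -invfM -expr2 hsq. Qed.

Lemma KinvX_mul_F n : Kinv ^+ n * F = q ^+ n *: (F * Kinv ^+ n).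
Proof.
elim: n => [|n IH]; first by rewrite !expr0 mul1r mulr1 scale1r.
rewrite exprS -mulrA IH -scalerAr mulrA Kinv_mul_F -scalerAl -mulrA -exprS.
by rewrite scalerA -exprSr.
Qed.

Lemma E_mul_KinvX n : E * Kinv ^+ n = q ^+ n *: (Kinv ^+ n * E).
Proof.
elim: n => [|n IH]; first by rewrite !expr0 mul1r mulr1 scale1r.
rewrite exprSr mulrA IH -scalerAl -[_ * E * _]mulrA E_mul_Kinv -scalerAr.
by rewrite scalerA mulrA -!exprSr.
Qed.

Lemma qfactS n : qfact q n.+1 = qfact q n * qint q n.+1.
Proof. by rewrite /qfact big_nat_recr. Qed.

Lemma Fdiv0 : Fd 0 = 1.
Proof. by rewrite /Fdiv /qfact big_geq // invr1 scale1r !expr0 mulr1. Qed.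

Lemma Ediv0 : Ed 0 = 1.
Proof. by rewrite /Ediv /qfact big_geq // invr1 scale1r !expr0 mulr1. Qed.

Lemma Gdiv0 : Gd 0 = 1.
Proof. by rewrite /Gdiv fact0 invr1 scale1r expr0. Qed.

Lemma Fdiv_mul_FKinv n :
  Fd n * (F * Kinv) = (q ^+ n * qint q n.+1) *: Fd n.+1.
Proof.
rewrite /Fdiv -scalerAl mulrA -(mulrA (F ^+ n)) KinvX_mul_F -scalerAr -scalerAl.
rewrite mulrA -exprSr -mulrA -exprSr !scalerA qfactS invfM; congr (_ *: _).
by rewrite [RHS]mulrAC (mulrA (q ^+ n)) divfK ?qint_neq0 // mulrC.
Qed.

Lemma KinvE_mul_Ediv n :
  (Kinv * E) * Ed n = (q ^+ n * qint q n.+1) *: Ed n.+1.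
Proof.
rewrite /Ediv -scalerAr -mulrA (mulrA E) E_mul_KinvX -scalerAl -scalerAr.
rewrite !(mulrA Kinv) -exprS -mulrA -exprS !scalerA qfactS invfM; congr (_ *: _).
by rewrite [RHS]mulrAC (mulrA (q ^+ n)) divfK ?qint_neq0 // mulrC.
Qed.

Lemma Gdiv_mul_G n : Gd n * G = n.+1%:R *: Gd n.+1.
Proof.
rewrite /Gdiv -scalerAl -exprSr scalerA factS natrM invfM mulrA mulfV ?mul1r //.
by rewrite pnatr_eq0.
Qed.

Lemma f_mul_FKinv a : a != 0 -> f a * (F * Kinv) = a ^- 2 *: (F * Kinv * f a).
Proof.
by move=> a0; rewrite mulrA (U_fF hU) // -scalerAl -!mulrA f_comm ?invr_eq0.
Qed.

Lemma KinvE_mul_f a : a != 0 -> (Kinv * E) * f a = a ^- 2 *: (f a * (Kinv * E)).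
Proof.
move=> a0; have Ef : E * f a = a ^- 2 *: (f a * E).
  by rewrite (U_fE hU) // scalerA mulVf ?scale1r // expf_neq0.
by rewrite -mulrA Ef -scalerAr mulrA -f_comm ?invr_eq0 // -mulrA.
Qed.

Lemma Delta_Kinv : Delta Kinv = tens Kinv Kinv.
Proof. by rewrite (Delta_f hD) // invr_eq0. Qed.

Lemma Delta_FKinv : Delta (F * Kinv) = tens (F * Kinv) 1 + tens (f q^-1) (F * Kinv).
Proof.
by rewrite (Delta_mul hD) (Delta_F hD) Delta_Kinv mulrDl !(tens_mul hT) K_mul_Kinv Kinv_sqr.
Qed.

Lemma Delta_KinvE : Delta (Kinv * E) = tens (Kinv * E) 1 + tens (f q^-1) (Kinv * E).
Proof.
by rewrite (Delta_mul hD) (Delta_E hD) Delta_Kinv mulrDr !(tens_mul hT) Kinv_mul_K Kinv_sqr.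
Qed.

Lemma f_qVn0 : f (q ^- 0) = 1.
Proof. by rewrite expr0 invr1 (U_f1 hU). Qed.

Lemma f_qVnS r : f (q ^- r) * f q^-1 = f (q ^- r.+1).
Proof. by rewrite (U_fmul hU) ?qVn_neq0 ?invr_eq0 // exprSr invfM. Qed.

Lemma Delta_Fdiv n :
  Delta (Fd n) = \sum_(r < n.+1) tens (Fd (n - r) * f (q ^- r)) (Fd r).
Proof.
apply: (coproduct_divided_power tensl_lin tensr_lin (tens_mul hT) (tens_one hT)
  (Delta_lin hD) (Delta_mul hD) (Delta_one hD) Delta_FKinv f_qVn0 f_qVnS
  (c := fun r => (q ^- r) ^- 2) _ Fdiv0 Fdiv_mul_FKinv).
- by move=> r; apply: f_mul_FKinv.
- by move=> r; rewrite mulf_neq0 ?expf_neq0 ?qint_neq0.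
- by rewrite expr0 invr1 expr1n invr1.
- exact: qint_pascal.
Qed.

Lemma Delta_Gdiv n : Delta (Gd n) = \sum_(r < n.+1) tens (Gd (n - r)) (Gd r).
Proof.
have Delta_G : Delta G = tens G 1 + tens 1 G by rewrite (Delta_G hD) addrC.
rewrite (coproduct_divided_power tensl_lin tensr_lin (tens_mul hT) (tens_one hT)
  (Delta_lin hD) (Delta_mul hD) (Delta_one hD) Delta_G (g := fun=> 1) (c := fun=> 1)
  (N := fun n => n.+1%:R) _ (fun=> mulr1 _) _ Gdiv0 Gdiv_mul_G) //.
- by under eq_bigr do rewrite mulr1.
- by move=> r; rewrite mul1r mulr1 scale1r.
- by move=> r; rewrite pnatr_eq0.
- by move=> r m; rewrite mul1r -natrD; congr _%:R; lia.
Qed.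

(* [E^(n)] grows by left multiplication with [K^-1 E], so the divided power
   lemma is applied in the opposite algebras. *)
Lemma Delta_Ediv n :
  Delta (Ed n) = \sum_(r < n.+1) tens (f (q ^- r) * Ed (n - r)) (Ed r).
Proof.
have := @coproduct_divided_power _ U^c T^c tens Delta tensl_lin tensr_lin
  (fun a b c d => tens_mul hT c d a b) (tens_one hT) (Delta_lin hD)
  (fun x y => Delta_mul hD y x) (Delta_one hD) _ _ (fun r => f (q ^- r)) Ed
  (fun n => q ^+ n * qint q n.+1) (fun r => (q ^- r) ^- 2) Delta_KinvE f_qVn0 _
  (fun r => KinvE_mul_f (qVn_neq0 r)) Ediv0 KinvE_mul_Ediv _ _ (qint_pascal hq) n.
apply.
- by move=> r; rewrite -f_qVnS -f_comm ?qVn_neq0 ?invr_eq0.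
- by move=> r; rewrite mulf_neq0 ?expf_neq0 ?qint_neq0.
- by rewrite expr0 invr1 expr1n invr1.
Qed.

Lemma Delta_pbw N i nu j k : nu != 0 -> (i < N)%N -> (j < N)%N -> (k < N)%N ->
  Delta (pbw (i, nu, j, k)) = \sum_(r < N) \sum_(s < N) \sum_(t < N)
    (if [&& r <= i, s <= j & t <= k]%N then
       tens (pbw ((i - r)%N, q ^- (r + s) * nu, (j - s)%N, (k - t)%N))
            (pbw (r : nat, nu, s : nat, t : nat))
     else 0).
Proof.
move=> nu0 iN jN kN; rewrite /pbw /= !(Delta_mul hD) (Delta_f hD nu0).
rewrite Delta_Fdiv Delta_Ediv Delta_Gdiv.
rewrite (big_ord_widen_if (fun r => tens (Fd (i - r) * f (q ^- r)) (Fd r)) iN).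
rewrite (big_ord_widen_if (fun s => tens (f (q ^- s) * Ed (j - s)) (Ed s)) jN).
rewrite (big_ord_widen_if (fun t => tens (Gd (k - t)) (Gd t)) kN).
rewrite !mulr_suml; apply: eq_bigr => r _.
rewrite [_ * tens (f nu) (f nu) * _]mulr_sumr mulr_suml; apply: eq_bigr => s _.
rewrite mulr_sumr; apply: eq_bigr => t _.
case: (r <= i)%N; last by rewrite !mul0r.
case: (s <= j)%N; last by rewrite !(mul0r, mulr0).
case: (t <= k)%N; last by rewrite !(mul0r, mulr0).
rewrite /= !(tens_mul hT); congr (tens _ _).
rewrite -!mulrA; congr (_ * _); rewrite !mulrA; congr (_ * _ * _).
by rewrite !(U_fmul hU) ?mulf_neq0 ?qVn_neq0 // exprD invfM mulrAC.
Qed.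

(* [id (x) (coefficient of pbw b)], defined on the basis of [T]. *)
Definition rcoord (b : pbw_index R) : T -> U :=
  basis_ext (tens_basis hT)
    (fun p : pbw_index R * pbw_index R => if p.2 == b then pbw p.1 else 0).

HB.instance Definition _ b :=
  GRing.isLinear.Build R[i] T U *:%R (rcoord b) (basis_ext_is_linear _ _).

Lemma rcoord_tens_pbw b y b' : pbw_ok b' ->
  rcoord b (tens y (pbw b')) = if b' == b then y else 0.
Proof.
move=> ok_b'; have [S [PS ->]] := (span_ofP _ _ y).1 ((U_pbw hU).1 y).
rewrite linear_sumlz /=; under eq_bigr do rewrite linearZl /=.
have -> : \sum_(p <- S) p.2 *: tens (pbw p.1) (pbw b') =
  \sum_(p <- [seq (p.1, b', p.2) | p <- S]) p.2 *: tens (pbw p.1.1) (pbw p.1.2).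
  by rewrite big_map.
rewrite /rcoord basis_ext_lincomb ?big_map /=; last by move=> p /mapP[p' /PS ? ->].
by case: eqP => // _; rewrite big1 // => p _; rewrite scaler0.
Qed.

Lemma rcoord_tens_in (Y : U -> Prop) b y u :
  subspace Y -> Y y -> Y (rcoord b (tens y u)).
Proof.
move=> sY Yy; have [S [PS ->]] := (span_ofP _ _ u).1 ((U_pbw hU).1 u).
rewrite linear_sumr linear_sum big_seq; apply: subspace_sum => // p Sp.
rewrite linearZr linearZ /= rcoord_tens_pbw; last exact: PS.
by apply: subspaceZ => //; case: eqP => _ //; case: sY.
Qed.

Lemma rcoord_tensor_XU (Y : U -> Prop) b t :
  subspace Y -> tensor_XU tens Y t -> Y (rcoord b t).
Proof.
move=> sY [S [YS ->]]; rewrite linear_sum big_seq.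
by apply: subspace_sum => // p /YS; apply: rcoord_tens_in.
Qed.

Lemma rcoord_Delta_pbw r mu s t i nu j k : nu != 0 ->
  rcoord (r, mu, s, t) (Delta (pbw (i, nu, j, k))) =
  if (nu == mu) && (r <= i)%N && (s <= j)%N && (t <= k)%N
  then pbw ((i - r)%N, q ^- (r + s) * nu, (j - s)%N, (k - t)%N) else 0.
Proof.
move=> nu0; set N := (i + j + k).+1.
have [iN jN kN] : [/\ i < N, j < N & k < N]%N by rewrite /N; split; lia.
pose Y r' s' t' := if (nu == mu) && (r' <= i)%N && (s' <= j)%N && (t' <= k)%N
  then pbw ((i - r')%N, q ^- (r' + s') * nu, (j - s')%N, (k - t')%N) else 0.
rewrite (Delta_pbw nu0 iN jN kN) linear_sum.
under eq_bigr => r' _ do rewrite linear_sum.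
under eq_bigr => r' _ do under eq_bigr => s' _ do rewrite linear_sum.
under eq_bigr => r' _ do under eq_bigr => s' _ do under eq_bigr => t' _ do
  rewrite /= fun_if linear0 rcoord_tens_pbw // !xpair_eqE if_and_swap.
rewrite (big_ord3_delta _ _ _ _ Y) /Y.
have [cond|_] := boolP ((nu == mu) && (r <= i)%N && (s <= j)%N && (t <= k)%N).
  move: (cond) => /andP[/andP[/andP[_ ri] sj] tk].
  by rewrite (leq_ltn_trans ri iN) (leq_ltn_trans sj jN) (leq_ltn_trans tk kN).
by rewrite if_same.
Qed.

Lemma rcoord_Delta_comb (l : seq (pbw_index R)) alpha r mu s t :
  (forall x, x \in l -> pbw_ok x) ->
  rcoord (r, mu, s, t) (Delta (\sum_(x <- l) alpha x *: pbw x)) =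
  Xrmst q sq E F G f l alpha r mu s t.
Proof.
move=> l_ok; rewrite !linear_sum /Xrmst [RHS]big_mkcond /=.
apply: eq_big_seq => -[[[i nu] j] k] /l_ok nu0 /=.
rewrite !linearZ /= rcoord_Delta_pbw //.
by case: eqVneq => [->|_] /=; [case: ifP|]; rewrite ?scaler0.
Qed.

Lemma coideal_contains_Xrmst (Y : U -> Prop) (X : U) (l : seq (pbw_index R))
    alpha r mu s t :
  right_coideal tens Delta Y -> Y X -> (forall x, x \in l -> pbw_ok x) ->
  X = \sum_(x <- l) alpha x *: pbw x -> Y (Xrmst q sq E F G f l alpha r mu s t).
Proof.
move=> [sY cY] YX l_ok eX; rewrite -rcoord_Delta_comb // -eX.
exact: rcoord_tensor_XU (cY X YX).
Qed.

Lemma tensor_XU_subspace (Y : U -> Prop) : subspace Y -> subspace (tensor_XU tens Y).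
Proof.
move=> sY; split; first by exists [::]; rewrite big_nil.
move=> a _ _ [S [YS ->]] [S' [YS' ->]].
exists ([seq (a *: p.1, p.2) | p <- S] ++ S'); split.
  by move=> p; rewrite mem_cat => /orP[/mapP[p' /YS ? ->]|/YS'] //; apply: subspaceZ.
rewrite big_cat big_map scaler_sumr; congr (_ + _).
by apply: eq_bigr => p _; rewrite linearZl.
Qed.

Lemma tensor_XU_tens (Y : U -> Prop) y z : Y y -> tensor_XU tens Y (tens y z).
Proof. by move=> Yy; exists [:: (y, z)]; rewrite big_seq1; split=> // p /[!inE] /eqP ->. Qed.

Definition pbw_bound (l : seq (pbw_index R)) : nat :=
  (\max_(x <- l) (x.1.1.1 + x.1.2 + x.2)).+1.

Lemma pbw_boundP l x : x \in l ->
  [/\ x.1.1.1 < pbw_bound l, x.1.2 < pbw_bound l & x.2 < pbw_bound l]%N.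
Proof.
move=> xl; have := @leq_bigmax_seq _ l predT
  (fun x : pbw_index R => x.1.1.1 + x.1.2 + x.2)%N x xl isT.
by rewrite /pbw_bound; set M := \max_(_ <- _) _ => /= ?; split; lia.
Qed.

Lemma Delta_pbw_shift N i nu j k r s t :
  nu != 0 -> (i < N)%N -> (j < N)%N -> (k < N)%N ->
  (r <= i)%N -> (s <= j)%N -> (t <= k)%N ->
  Delta (pbw ((i - r)%N, q ^- (r + s) * nu, (j - s)%N, (k - t)%N)) =
  \sum_(r' < N) \sum_(s' < N) \sum_(t' < N)
    (if (r + r' <= i)%N && (s + s' <= j)%N && (t + t' <= k)%N then
       tens (pbw ((i - (r + r'))%N, q ^- (r + r' + (s + s')) * nu,
                  (j - (s + s'))%N, (k - (t + t'))%N))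
            (pbw (r' : nat, q ^- (r + s) * nu, s' : nat, t' : nat))
     else 0).
Proof.
move=> nu0 iN jN kN ri sj tk.
rewrite (@Delta_pbw N) ?mulf_neq0 ?qVn_neq0 //; try lia.
apply: eq_bigr => r' _; apply: eq_bigr => s' _; apply: eq_bigr => t' _.
have -> : [&& r' <= i - r, s' <= j - s & t' <= k - t]%N =
          (r + r' <= i)%N && (s + s' <= j)%N && (t + t' <= k)%N.
  by rewrite -andbA; apply/and3P/and3P => -[? ? ?]; split; lia.
rewrite !subnDA mulrA -invfM -exprD.
by congr (if _ then tens (pbw (_, _ ^- _ * _, _, _)) _ else _); lia.
Qed.

Lemma Delta_Xrmst (l : seq (pbw_index R)) alpha r mu s t :
  (forall x, x \in l -> pbw_ok x) ->
  Delta (Xrmst q sq E F G f l alpha r mu s t) =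
  \sum_(r' < pbw_bound l) \sum_(s' < pbw_bound l) \sum_(t' < pbw_bound l)
     tens (Xrmst q sq E F G f l alpha (r + r') mu (s + s') (t + t'))
          (pbw (r' : nat, q ^- (r + s) * mu, s' : nat, t' : nat)).
Proof.
move=> l_ok; under [RHS]eq_bigr => r' _ do under eq_bigr => s' _ do
  under eq_bigr => t' _ do rewrite /Xrmst linear_sumlz big_mkcond /=.
rewrite /Xrmst linear_sum big_mkcond /= exchange_big_ord3.
apply: eq_big_seq => -[[[i nu] j] k] xl /=.
have [/= iN jN kN] := pbw_boundP xl; have nu0 : nu != 0 := l_ok _ xl.
case: eqVneq => [<-|_] /=; last by rewrite !big1_eq.
case: (boolP ((r <= i) && (s <= j) && (t <= k))%N) => [/andP[/andP[ri sj] tk]|c].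
  rewrite linearZ /= (Delta_pbw_shift nu0 iN jN kN ri sj tk).
  do 3!(rewrite scaler_sumr; apply: eq_bigr => ? _).
  by case: ifP; rewrite ?linearZl ?scaler0.
symmetry; do 3!(apply: big1 => ? _).
by case: ifP => // h; move: c h; rewrite /=; lia.
Qed.

Definition Xrmst_span (l : seq (pbw_index R)) alpha : U -> Prop :=
  span_of (fun p : nat * R[i] * nat * nat => p.1.1.2 != 0)
    (fun p => Xrmst q sq E F G f l alpha p.1.1.1 p.1.1.2 p.1.2 p.2).

Lemma Xrmst_span_Xrmst l alpha r mu s t : mu != 0 ->
  Xrmst_span l alpha (Xrmst q sq E F G f l alpha r mu s t).
Proof.
by move=> mu0; exists [:: (r, mu, s, t)], (fun=> 1); rewrite big_seq1 scale1r;
  split=> // p /[!inE] /eqP ->.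
Qed.

Lemma Xrmst_span_coideal l alpha : (forall x, x \in l -> pbw_ok x) ->
  right_coideal tens Delta (Xrmst_span l alpha).
Proof.
move=> l_ok; split=> [|_ /span_ofP[S [PS ->]]]; first exact: span_subspace.
have sXU := tensor_XU_subspace (span_subspace _ _ : subspace (Xrmst_span l alpha)).
rewrite linear_sum big_seq /=; apply: subspace_sum => // -[[[[r mu] s] t] c] /PS /= mu0.
rewrite linearZ /= Delta_Xrmst //; apply: subspaceZ => //.
do 3!apply: subspace_sum => // ? _.
exact: tensor_XU_tens (Xrmst_span_Xrmst _ _ _ _ _ mu0).
Qed.

Lemma Xrmst_span_X (X : U) l alpha : (forall x, x \in l -> pbw_ok x) ->
  X = \sum_(x <- l) alpha x *: pbw x -> Xrmst_span l alpha X.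
Proof.
move=> l_ok ->; set u := undup [seq x.1.1.2 | x <- l].
apply/span_ofP; exists [seq (0%N, mu, 0%N, 0%N, 1) | mu <- u]; split.
  by move=> p /mapP[mu]; rewrite mem_undup => /mapP[x /l_ok ? ->] ->.
rewrite big_map -(@big_seq_partition _ _ _ (fun x : pbw_index R => x.1.1.2) u) ?undup_uniq //.
  apply: eq_bigr => mu _; rewrite scale1r /Xrmst.
  apply: eq_big => [x|[[[i nu] j] k]]; first by rewrite !leq0n !andbT.
  by move=> /= /eqP ->; rewrite !subn0 expr0 invr1 mul1r.
by move=> mu; rewrite mem_undup.
Qed.

End QuantumAlgebra.

Theorem proposition4p1
  (R : realType) (q sq : R[i])
  (hq : transcendental q) (hsq : sq ^+ 2 = q)
  (U : algType R[i]) (E F G : U) (f : R[i] -> U)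
  (hU : is_U q sq E F G f)
  (T : algType R[i]) (tens : U -> U -> T)
  (hT : is_tensor_square q sq E F G f tens)
  (Delta : U -> T) (hD : is_coproduct sq E F G f tens Delta)
  (Xc : U -> Prop) (hXc : right_coideal tens Delta Xc)
  (X : U) (hX : Xc X)
  (l : seq (pbw_index R)) (alpha : pbw_index R -> R[i])
  (hl_uniq : uniq l) (hl_ok : forall x, x \in l -> pbw_ok x)
  (hXl : X = \sum_(x <- l) alpha x *: pbw q sq E F G f x) :
  (forall (r : nat) (mu : R[i]) (s t : nat), mu != 0 ->
      Xc (Xrmst q sq E F G f l alpha r mu s t)) /\
  (let Lin := span_of (fun p : nat * R[i] * nat * nat => p.1.1.2 != 0)
                (fun p => Xrmst q sq E F G f l alpha p.1.1.1 p.1.1.2 p.1.2 p.2) in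
   [/\ right_coideal tens Delta Lin, Lin X &
       forall Y : U -> Prop, right_coideal tens Delta Y -> Y X ->
         forall y, Lin y -> Y y]).
Proof.
have Xrmst_in Y : right_coideal tens Delta Y -> Y X -> forall r mu s t,
    Y (Xrmst q sq E F G f l alpha r mu s t).
  by move=> cY YX r mu s t; apply: (coideal_contains_Xrmst hq hsq hU hT hD) hl_ok hXl.
split=> [r mu s t _|Lin]; first exact: Xrmst_in.
split; first exact: (Xrmst_span_coideal hq hsq hU hT hD).
  exact: Xrmst_span_X hl_ok hXl.
move=> Y cY YX; apply: span_of_sub cY.1 _ => p _; exact: Xrmst_in.
Qed.
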